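(* Let $\{M_n\}_{n\ge 0}$ be the Motzkin numbers, determined by $M_0=M_1=1$ and $(n+3)M_{n+1}=(2n+3)M_n+3nM_{n-1}$ for $n\ge 1$. Then $\{M_n\}_{n\ge 0}$ is log-convex.
   Context: A sequence $a_0,a_1,\ldots$ of nonnegative real numbers is log-convex if $a_{k-1}a_{k+1}\ge a_k^2$ for all $k\ge 1$. *)

From mathcomp Require Import all_boot all_order all_algebra.
Set Implicit Arguments. Unset Strict Implicit. Unset Printing Implicit Defensive.
Import Order.TTheory GRing.Theory Num.Theory.
Local Open Scope ring_scope.

Definition log_convex (R : numDomainType) (a : nat -> R) : Prop :=
  (forall k, 0 <= a k) /\ (forall k, (1 <= k)%N -> a k ^+ 2 <= a k.-1 * a k.+1).

Definition motzkin_rec (R : numDomainType) (M : nat -> R) : Prop :=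
  M 0%N = 1 /\ M 1%N = 1 /\
  forall n, (1 <= n)%N ->
    (n + 3)%:R * M n.+1 = (2 * n + 3)%:R * M n + (3 * n)%:R * M n.-1.

From mathcomp Require Import all_boot all_order all_algebra.
From mathcomp Require Import ring lra.
Import Order.TTheory GRing.Theory Num.Theory.
Local Open Scope ring_scope.

(* The ratio M_{n+1} / M_n stays in the window
   [(6n+6)/(2n+5), (12n+21)/(4n+13)] from n = 2 on: each bound at n yields the
   other bound at n+1 through the recurrence. Inside the window the quadratic
   (n+4) r^2 - (2n+5) r - 3(n+1) is nonpositive at r = M_{n+1} / M_n, which is
   exactly M_{n+1}^2 <= M_n M_{n+2}. *)

Definition ratio_window {R : realFieldType} (t x y : R) : Prop :=
  [/\ 0 < x, (6 * t + 6) * x <= (2 * t + 5) * y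
           & (4 * t + 13) * y <= (12 * t + 21) * x].

Section MotzkinStep.

Context {R : realFieldType} {t x y z : R}.
Hypothesis recurrence : (t + 4) * z = (2 * t + 5) * y + 3 * (t + 1) * x.

Lemma ratio_window_lower_step : 0 <= t -> ratio_window t x y ->
  (6 * t + 12) * y <= (2 * t + 7) * z.
Proof.
move=> t_ge0 [x_gt0 _ hi]; have t4_gt0 : 0 < t + 4 by lra.
rewrite -(ler_pM2l t4_gt0) [X in _ <= X]mulrCA recurrence.
(* 2t^2 + 12t + 13 = (t+4)(6t+12) - (2t+5)(2t+7) is the coefficient of y left over. *)
have : (2 * t * t + 12 * t + 13) * ((4 * t + 13) * y)
       <= (2 * t * t + 12 * t + 13) * ((12 * t + 21) * x).
  by rewrite ler_pM2l //; nra.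
nra.
Qed.

Lemma ratio_window_upper_step : 0 <= t -> ratio_window t x y ->
  (4 * t + 17) * z <= (12 * t + 33) * y.
Proof.
move=> t_ge0 [x_gt0 lo _]; have t4_gt0 : 0 < t + 4 by lra.
rewrite -(ler_pM2l t4_gt0) [X in X <= _]mulrCA recurrence.
(* 4t^2 + 27t + 47 = (t+4)(12t+33) - (2t+5)(4t+17) is the coefficient of y left over. *)
have : (4 * t * t + 27 * t + 47) * ((6 * t + 6) * x)
       <= (4 * t * t + 27 * t + 47) * ((2 * t + 5) * y).
  by rewrite ler_pM2l //; nra.
nra.
Qed.

Lemma ratio_window_step : 0 <= t -> ratio_window t x y -> ratio_window (t + 1) y z.
Proof.
move=> t_ge0 win; have [x_gt0 lo _] := win.
have := ratio_window_lower_step t_ge0 win.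
have := ratio_window_upper_step t_ge0 win.
split; [nra | lra | lra].
Qed.

Lemma ratio_window_log_convex : 0 <= t -> ratio_window t x y -> y ^+ 2 <= x * z.
Proof.
move=> t_ge0 [x_gt0 lo hi]; have t4_gt0 : 0 < t + 4 by lra.
have t13_gt0 : 0 < 4 * t + 13 by lra.
have y_gt0 : 0 < y by nra.
(* (4t+13)(t+4) y^2 <= (12t+21)(t+4) x y leaves (t+1)(4t+19) x y to bound. *)
have hi_weak : (4 * t + 19) * y <= (12 * t + 39) * x.
  rewrite -(ler_pM2l t13_gt0).
  have : (4 * t + 19) * ((4 * t + 13) * y) <= (4 * t + 19) * ((12 * t + 21) * x).
    by rewrite ler_pM2l //; lra.
  nra.
rewrite -(ler_pM2l t4_gt0) [X in _ <= X]mulrCA recurrence -(ler_pM2l t13_gt0).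
have : (t + 4) * y * ((4 * t + 13) * y) <= (t + 4) * y * ((12 * t + 21) * x).
  by rewrite ler_pM2l //; nra.
have : (t + 1) * x * ((4 * t + 19) * y) <= (t + 1) * x * ((12 * t + 39) * x).
  by rewrite ler_pM2l //; nra.
nra.
Qed.

End MotzkinStep.

Section MotzkinSequence.

Context {R : realFieldType} {M : nat -> R}.
Hypothesis motzkinM : motzkin_rec M.

Lemma motzkin_recS n :
  (n%:R + 4) * M n.+2 = (2 * n%:R + 5) * M n.+1 + 3 * (n%:R + 1) * M n.
Proof.
have [_ [_ rec]] := motzkinM; have := rec n.+1 isT.
rewrite /= !natrD !natrM -natr1 => rec_n.
transitivity ((n%:R + 1 + 3%:R) * M n.+2); first by ring.
by rewrite rec_n; ring.
Qed.

Lemma motzkin_initial : [/\ M 0 = 1, M 1 = 1, M 2 = 2 & M 3 = 4].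
Proof.
have [M0 [M1 _]] := motzkinM.
have M2 : M 2 = 2 by have := motzkin_recS 0; rewrite M0 M1; lra.
have M3 : M 3 = 4 by have := motzkin_recS 1; rewrite M1 M2; lra.
by [].
Qed.

Lemma motzkin_ratio_window n : ratio_window n.+2%:R (M n.+2) (M n.+3).
Proof.
have [_ _ M2 M3] := motzkin_initial.
elim: n => [|n IHn]; first by rewrite M2 M3; split; lra.
rewrite -[n.+3%:R]natr1.
exact: ratio_window_step (motzkin_recS n.+2) (ler0n _ _) IHn.
Qed.

End MotzkinSequence.

Theorem corollary3p3 (R : realFieldType) (M : nat -> R) :
  motzkin_rec M -> log_convex M.
Proof.
move=> motzkinM; have [M0 M1 M2 M3] := motzkin_initial motzkinM.
split=> [[|[|n]]|[|[|[|n]]] //= _].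
- by rewrite M0.
- by rewrite M1.
- by have [/ltW] := motzkin_ratio_window motzkinM n.
- by rewrite M0 M1 M2; lra.
- by rewrite M1 M2 M3; lra.
exact: ratio_window_log_convex (motzkin_recS motzkinM n.+2) (ler0n _ _)
                               (motzkin_ratio_window motzkinM n).
Qed.
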